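(* Let $n\ge 3$ and let $r=(r_1,\dots,r_n)$ be positive real numbers such that $2r_j\le \sum_{i=1}^n r_i$ for every $j$ and $r_1\pm r_2\pm\cdots\pm r_n\neq 0$ for every choice of signs. Let ${\cal U}_r=\{U=(u_1,\dots,u_n)\in (S^4)^n : \sum_{i=1}^n r_iu_i=0\}$, where $S^4\subset\mathbb{R}^5$ is the unit sphere, with $SO(5)$ acting diagonally. Then every degenerate $U\in{\cal U}_r$ is of type $2$ or of type $3$; that is, if the stabilizer of $U$ in $SO(5)$ is nontrivial, then it is a subgroup isomorphic to $SO(2)$ or to $SO(3)$.
   Context: An element $U\in{\cal U}_r$ (equivalently the closed polygon in $\mathbb{R}^5$ with edge vectors $r_iu_i$) is called degenerate if its stabilizer under the diagonal $SO(5)$-action is a nontrivial subgroup of $SO(5)$. A degenerate polygon is of type $k$ if its stabilizer is a subgroup $H_k\subseteq SO(5)$ isomorphic to $SO(k)$. *)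

From HB Require Import structures.
From mathcomp Require Import all_boot all_order all_algebra.
From mathcomp Require Import reals.
Set Implicit Arguments. Unset Strict Implicit. Unset Printing Implicit Defensive.
Import Order.TTheory GRing.Theory Num.Theory.
Local Open Scope ring_scope.

Definition SOmx (R : realType) (k : nat) : pred 'M[R]_k :=
  fun A => (A^T *m A == 1%:M) && (\det A == 1).

Definition S4 (R : realType) : pred 'cV[R]_5 :=
  fun u => \sum_(j < 5) u j 0 ^+ 2 == 1.

Definition in_Ur (R : realType) (n : nat) (r : 'I_n -> R)
  (U : 'I_n -> 'cV[R]_5) : Prop :=
  (forall i, U i \in @S4 R) /\ \sum_(i < n) r i *: U i = 0.

Definition stab (R : realType) (n : nat) (U : 'I_n -> 'cV[R]_5) : pred 'M[R]_5 :=
  fun g => (g \in @SOmx R 5) && [forall i, g *m U i == U i].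

Definition degenerate (R : realType) (n : nat) (U : 'I_n -> 'cV[R]_5) : Prop :=
  exists2 g, g \in stab U & g != 1%:M.

Definition iso_to_SO (R : realType) (k : nat) (H : pred 'M[R]_5) : Prop :=
  exists phi : 'M[R]_k -> 'M[R]_5,
    [/\ {in @SOmx R k, forall A, phi A \in H},
        {in @SOmx R k &, injective phi},
        {in H, forall g, exists2 A, A \in @SOmx R k & phi A = g} &
        {in @SOmx R k &, forall A B, phi (A *m B) = phi A *m phi B}].

Definition of_type (R : realType) (n : nat) (U : 'I_n -> 'cV[R]_5) (k : nat) : Prop :=
  iso_to_SO k (stab U).

(* Let W be the span of the u_i.  A rotation fixes every u_i iff it is the
   identity on W and a rotation of the orthogonal complement W^⊥; in
   orthonormal bases of W and W^⊥ (Gram-Schmidt) this identifies the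
   stabilizer with SO(k), k = 5 - dim W.  A nontrivial stabilizer forces
   k >= 2, as SO(0) and SO(1) are trivial.  The u_i are unit vectors, so
   dim W >= 1, and dim W = 1 would give u_i = ±e for one unit vector e, hence
   r_1 ± r_2 ± ... ± r_n = 0, which is excluded; so k <= 3. *)

From HB Require Import structures.
From mathcomp Require Import all_boot all_order all_algebra.
From mathcomp Require Import reals.
From mathcomp Require Import zify.
Set Implicit Arguments.
Unset Strict Implicit.
Unset Printing Implicit Defensive.

Import Order.TTheory GRing.Theory Num.Theory.
Local Open Scope ring_scope.

Section OrthonormalFrames.
Variables (R : rcfType) (N : nat).

Lemma orthogonal_sym p q (B : 'M[R]_(p, N)) (C : 'M[R]_(q, N)) :
  B *m C^T = 0 -> C *m B^T = 0.
Proof. by move=> BC; rewrite -[C *m _]trmxK trmx_mul trmxK BC trmx0. Qed.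

Lemma orthonormal_col_mx p q (B : 'M[R]_(p, N)) (C : 'M[R]_(q, N)) :
  B *m B^T = 1%:M -> C *m C^T = 1%:M -> B *m C^T = 0 ->
  col_mx B C *m (col_mx B C)^T = 1%:M.
Proof.
move=> BB CC BC; rewrite tr_col_mx mul_col_row BB CC BC (orthogonal_sym BC).
by rewrite -scalar_mx_block.
Qed.

Lemma orthonormal_rank p (B : 'M[R]_(p, N)) : B *m B^T = 1%:M -> \rank B = p.
Proof.
move=> BB; apply/eqP; rewrite eqn_leq rank_leq_row /=.
by rewrite -{1}(mxrank1 R p) -BB mxrankM_maxl.
Qed.

Lemma tr_orthonormal_sq p (Q : 'M[R]_(p, N)) :
  p = N -> Q *m Q^T = 1%:M -> Q^T *m Q = 1%:M.
Proof. by move=> pN; subst p; apply: mulmx1C. Qed.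

Lemma det_orthonormal_conj p (Q : 'M[R]_(p, N)) (D : 'M[R]_p) :
  p = N -> Q *m Q^T = 1%:M -> \det (Q^T *m D *m Q) = \det D.
Proof.
move=> pN; subst p => QQ.
by rewrite !det_mulmx mulrAC [\det Q^T * _]mulrC -det_mulmx QQ det1 mul1r.
Qed.

Lemma row_orthonormal_proj p (B : 'M[R]_(p, N)) (v : 'rV[R]_N) :
  B *m B^T = 1%:M -> (v <= B)%MS -> v *m B^T *m B = v.
Proof.
by move=> BB /submxP[x ->]; rewrite -[x *m B *m _]mulmxA BB mulmx1.
Qed.

Lemma mulmx_tr_row_gt0 (v : 'rV[R]_N) : v != 0 -> 0 < (v *m v^T) 0 0.
Proof.
have sq_ge0 j : 0 <= v 0 j * v^T j 0 by rewrite mxE -expr2 sqr_ge0.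
move=> v_neq0; rewrite mxE lt_def sumr_ge0 // andbT.
apply: contra v_neq0 => /eqP/psumr_eq0P-/(_ (fun j _ => sq_ge0 j)) v2_eq0.
apply/eqP/rowP => j; apply/eqP; rewrite mxE -sqrf_eq0 expr2.
by have := v2_eq0 j isT; rewrite mxE => ->.
Qed.

Lemma unit_row_scale (v : 'rV[R]_N) :
  v != 0 -> exists2 c : R, c != 0 & (c *: v) *m (c *: v)^T = 1%:M.
Proof.
move=> /mulmx_tr_row_gt0 s_gt0; set s := (v *m v^T) 0 0 in s_gt0.
exists (Num.sqrt s)^-1; first by rewrite invr_eq0 gt_eqF ?sqrtr_gt0.
rewrite linearZ /= -scalemxAl -scalemxAr scalerA [v *m _]mx11_scalar -/s.
by rewrite scale_scalar_mx -expr2 exprVn sqr_sqrtr ?ltW // mulVf ?gt_eqF.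
Qed.

Lemma orthonormal_add_row p (B : 'M[R]_(p, N)) (a : 'rV[R]_N) :
  B *m B^T = 1%:M ->
  exists q (C : 'M[R]_(q, N)), C *m C^T = 1%:M /\ (C == col_mx a B)%MS.
Proof.
move=> BB; set v := a - a *m B^T *m B.
have vB : v *m B^T = 0.
  by rewrite /v mulmxBl -[_ *m B *m B^T]mulmxA BB mulmx1 subrr.
have [v0|v_neq0] := eqVneq v 0.
  have aB : (a <= B)%MS by rewrite -[a](subrK (a *m B^T *m B)) -/v v0 add0r submxMl.
  exists p, B; split => //.
  by rewrite col_mx_sub aB submx_refl -addsmxE addsmxSr.
have [c c_neq0 cv] := unit_row_scale v_neq0.
exists (1 + p)%N, (col_mx (c *: v) B); split.
  by apply: orthonormal_col_mx; rewrite // -scalemxAl vB scaler0.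
apply/andP; rewrite -!addsmxE !addsmx_sub !addsmxSr !andbT; split.
  by rewrite scalemx_sub // addmx_sub_adds // eqmx_opp submxMl.
have -> : a = c^-1 *: (c *: v) + a *m B^T *m B by rewrite scalerA mulVf // scale1r subrK.
by apply: addmx_sub_adds; [apply/scalemx_sub/submx_refl | apply: submxMl].
Qed.

Theorem gram_schmidt m (A : 'M[R]_(m, N)) :
  exists q (C : 'M[R]_(q, N)), C *m C^T = 1%:M /\ (C == A)%MS.
Proof.
elim: m A => [|m IHm] A.
  by exists 0%N, A; split; [apply/matrixP => -[] | exact/eqmxP/eqmx_refl].
rewrite -[A](@vsubmxK _ 1 m); set a := usubmx _; set A' := dsubmx _.
have [q [C' [CC' /eqmxP C'A']]] := IHm A'.
have [q' [C [CC /eqmxP Ca]]] := orthonormal_add_row a CC'.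
exists q', C; split => //; apply/eqmxP; apply: (eqmx_trans Ca).
apply: eqmx_trans (eqmx_sym (addsmxE a C')) (eqmx_trans _ (addsmxE a A')).
exact: adds_eqmx.
Qed.

Lemma orthonormal_compl d (B : 'M[R]_(d, N)) :
  B *m B^T = 1%:M ->
  exists k (C : 'M[R]_(k, N)), [/\ C *m C^T = 1%:M, B *m C^T = 0 & (d + k = N)%N].
Proof.
move=> BB; have [k [C [CC CK]]] := gram_schmidt (kermx B^T).
exists k, C; split => //.
  by apply: orthogonal_sym; apply/sub_kermxP; case/andP: CK.
have d_le_N : (d <= N)%N by rewrite -(orthonormal_rank BB) rank_leq_col.
have <- : (N - d)%N = k.
  by rewrite -(orthonormal_rank CC) (eqmx_rank CK) mxrank_ker mxrank_tr orthonormal_rank.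
exact: subnKC.
Qed.

End OrthonormalFrames.

Lemma SOmxE (R : realType) k (A : 'M[R]_k) :
  (A \in @SOmx R k) = (A^T *m A == 1%:M) && (\det A == 1).
Proof. by []. Qed.

Section ComplementExtension.
Variables (R : realType) (N d k : nat) (B : 'M[R]_(d, N)) (C : 'M[R]_(k, N)).
Hypotheses (BBt : B *m B^T = 1%:M) (CCt : C *m C^T = 1%:M) (BCt : B *m C^T = 0)
  (dk : (d + k = N)%N).

Let QQt : col_mx B C *m (col_mx B C)^T = 1%:M.
Proof. exact: orthonormal_col_mx. Qed.

Lemma frame_resolution1 : B^T *m B + C^T *m C = 1%:M.
Proof. by rewrite -mul_row_col -tr_col_mx tr_orthonormal_sq. Qed.

Definition extend_compl (A : 'M[R]_k) : 'M[R]_N := B^T *m B + C^T *m A *m C.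

Let extend_complE A :
  extend_compl A = (col_mx B C)^T *m block_mx 1%:M 0 0 A *m col_mx B C.
Proof.
by rewrite tr_col_mx mul_row_block mul_row_col !mulmx0 !mulmx1 addr0 add0r.
Qed.

Lemma extend_complK A : C *m extend_compl A *m C^T = A.
Proof.
rewrite mulmxDr mulmxDl !mulmxA (orthogonal_sym BCt) !mul0mx add0r CCt mul1mx.
by rewrite -mulmxA CCt mulmx1.
Qed.

Lemma extend_complM A A' :
  extend_compl (A *m A') = extend_compl A *m extend_compl A'.
Proof.
rewrite !extend_complE -!mulmxA (mulmxA (col_mx B C)) QQt mul1mx.
rewrite (mulmxA (block_mx _ _ _ A)) mulmx_block.
by rewrite !mulmx0 !mul0mx !mulmx1 !addr0 !add0r.
Qed.

Lemma trmx_extend_compl A : (extend_compl A)^T = extend_compl A^T.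
Proof. by rewrite linearD /= !trmx_mul !trmxK mulmxA. Qed.

Lemma extend_compl1 : extend_compl 1%:M = 1%:M.
Proof. by rewrite /extend_compl mulmx1 frame_resolution1. Qed.

Lemma det_extend_compl A : \det (extend_compl A) = \det A.
Proof.
by rewrite extend_complE det_orthonormal_conj // det_ublock det1 mul1r.
Qed.

Lemma extend_compl_SO A : A \in @SOmx R k -> extend_compl A \in @SOmx R N.
Proof.
rewrite !SOmxE => /andP[/eqP AA /eqP dA].
by rewrite trmx_extend_compl -extend_complM AA extend_compl1 det_extend_compl dA !eqxx.
Qed.

Lemma extend_compl_fix A (u : 'cV[R]_N) : C *m u = 0 -> extend_compl A *m u = u.
Proof.
move=> Cu; rewrite mulmxDl -[C^T *m A *m C *m u]mulmxA Cu mulmx0 addr0.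
by rewrite -{2}[u]mul1mx -frame_resolution1 mulmxDl -[C^T *m C *m u]mulmxA Cu mulmx0 addr0.
Qed.

Lemma extend_compl_restr g :
  g^T *m g = 1%:M -> g *m B^T = B^T -> extend_compl (C *m g *m C^T) = g.
Proof.
move=> gg gB.
have Bg : B *m g = B by rewrite -[B *m g]trmxK trmx_mul -{1}gB mulmxA gg mul1mx trmxK.
have gC : g *m C^T = C^T *m (C *m g *m C^T).
  rewrite -{1}[g]mul1mx -frame_resolution1 !mulmxDl -(mulmxA B^T B g) Bg.
  by rewrite -(mulmxA B^T B C^T) BCt mulmx0 add0r !mulmxA.
by rewrite /extend_compl -gC -{2}[g]mulmx1 -frame_resolution1 mulmxDr !mulmxA gB.
Qed.

Lemma restr_compl_SO g :
  g \in @SOmx R N -> g *m B^T = B^T -> C *m g *m C^T \in @SOmx R k.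
Proof.
rewrite !SOmxE => /andP[/eqP gg /eqP dg] gB; have g_ext := extend_compl_restr gg gB.
rewrite -det_extend_compl g_ext dg eqxx andbT; apply/eqP.
set A := C *m g *m C^T.
by rewrite -(extend_complK (A^T *m A)) extend_complM -trmx_extend_compl g_ext gg mulmx1 CCt.
Qed.

End ComplementExtension.

Definition vecs_mx (T : Type) n N (U : 'I_n -> 'cV[T]_N) : 'M[T]_(n, N) :=
  \matrix_(i, j) U i j 0.

Lemma row_vecs_mx (T : Type) n N (U : 'I_n -> 'cV[T]_N) i :
  row i (vecs_mx U) = (U i)^T.
Proof. by apply/rowP => j; rewrite !mxE. Qed.

Lemma vecs_mx_fixed (R : comPzRingType) n N (U : 'I_n -> 'cV[R]_N) (g : 'M[R]_N) :
  (forall i, g *m U i = U i) -> vecs_mx U *m g^T = vecs_mx U.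
Proof.
by move=> gU; apply/row_matrixP => i; rewrite row_mul row_vecs_mx -trmx_mul gU.
Qed.

Lemma S4_trmx_mul (R : realType) (u : 'cV[R]_5) : u \in @S4 R -> u^T *m u = 1%:M.
Proof.
rewrite unfold_in /S4 => /eqP u1; rewrite [u^T *m u]mx11_scalar mxE -u1.
by congr _%:M; apply: eq_bigr => j _; rewrite mxE expr2.
Qed.

Lemma signed_sum_neq0 (R : realFieldType) n (r c : 'I_n -> R) :
  (forall s : 'I_n -> bool, \sum_(i < n) (if s i then r i else - r i) != 0) ->
  (forall i, c i ^+ 2 = 1) -> \sum_(i < n) r i * c i != 0.
Proof.
move=> signs c2; suff -> : \sum_i r i * c i = \sum_i (if 0 < c i then r i else - r i) by [].
apply: eq_bigr => i _; have /eqP := c2 i; rewrite sqrf_eq1 => /orP[] /eqP ->.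
  by rewrite ltr01 mulr1.
by rewrite ltr0N1 mulrN1.
Qed.

Lemma SOmx_le1 (R : realType) k (A : 'M[R]_k) :
  (k <= 1)%N -> A \in @SOmx R k -> A = 1%:M.
Proof.
case: k A => [|[|//]] A _; first by move=> _; apply/matrixP => -[].
by rewrite SOmxE [A]mx11_scalar det_scalar1 => /andP[_ /eqP ->].
Qed.

Lemma iso_to_SO_le1 (R : realType) k (H : pred 'M[R]_5) :
  (k <= 1)%N -> {subset H <= @SOmx R 5} -> iso_to_SO k H -> {in H, forall g, g = 1%:M}.
Proof.
move=> k_le1 H_SO [phi [phiH _ phi_onto phiM]] g Hg.
have SO1 : 1%:M \in @SOmx R k by rewrite SOmxE trmx1 mulmx1 det1 !eqxx.
have phi1 : phi 1%:M = 1%:M.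
  have /H_SO := phiH _ SO1; rewrite SOmxE => /andP[/eqP phi1T _].
  have idem : phi 1%:M *m phi 1%:M = phi 1%:M by rewrite -phiM ?mulmx1.
  by rewrite -[LHS]mul1mx -phi1T -mulmxA idem.
by have [A /(SOmx_le1 k_le1) A1 <-] := phi_onto g Hg; rewrite A1.
Qed.

Lemma polygon_span_dim_gt1 (R : realType) n (r : 'I_n -> R) (U : 'I_n -> 'cV[R]_5)
    d (B : 'M[R]_(d, 5)) :
  (0 < n)%N ->
  (forall s : 'I_n -> bool, \sum_(i < n) (if s i then r i else - r i) != 0) ->
  in_Ur r U -> (forall i, B^T *m (B *m U i) = U i) -> (1 < d)%N.
Proof.
move=> n_gt0 signs [unitU sumU] UB.
have coord_unit i : (B *m U i)^T *m (B *m U i) = 1%:M.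
  by rewrite trmx_mul -mulmxA UB S4_trmx_mul.
case: d B UB coord_unit => [|[|//]] B _ coord_unit.
  move: (coord_unit (Ordinal n_gt0)); rewrite [B *m _]flatmx0 mulmx0.
  by move/matrixP/(_ 0 0); rewrite !mxE => /eqP; rewrite eq_sym oner_eq0.
pose c i := (B *m U i) 0 0.
have c2 i : c i ^+ 2 = 1.
  move: (coord_unit i); rewrite [B *m U i]mx11_scalar -/(c i) tr_scalar_mx -scalar_mxM.
  by move/matrixP/(_ 0 0); rewrite !mxE /= mulr1n -expr2.
have /negP[] := signed_sum_neq0 signs c2.
suff -> : \sum_i r i * c i = \sum_i (B *m (r i *: U i)) 0 0.
  by rewrite -summxE -mulmx_sumr sumU mulmx0 mxE.
by apply: eq_bigr => i _; rewrite -scalemxAr mxE.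
Qed.

Lemma stab_iso_SO_compl (R : realType) n (U : 'I_n -> 'cV[R]_5) d k
    (B : 'M[R]_(d, 5)) (C : 'M[R]_(k, 5)) :
  B *m B^T = 1%:M -> C *m C^T = 1%:M -> B *m C^T = 0 -> (d + k = 5)%N ->
  (B <= vecs_mx U)%MS -> (forall i, C *m U i = 0) -> of_type U k.
Proof.
move=> BB CC BC dk BU CU.
have fixB g : g \in stab U -> g *m B^T = B^T.
  case/andP=> _ /forallP gU.
  have gW : vecs_mx U *m g^T = vecs_mx U by apply: vecs_mx_fixed => i; apply/eqP.
  by have /submxP[X ->] := BU; rewrite trmx_mul mulmxA -[g *m _]trmxK trmx_mul trmxK gW.
exists (extend_compl B C); split.
- move=> A SOA; apply/andP; split; first exact: extend_compl_SO.
  by apply/forallP => i; rewrite extend_compl_fix.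
- by move=> A A' _ _ eqA; rewrite -(extend_complK CC BC A) eqA extend_complK.
- move=> g stab_g; have /andP[SOg _] := stab_g; have gB := fixB g stab_g.
  exists (C *m g *m C^T); first exact: restr_compl_SO BB CC BC dk _ SOg gB.
  by apply: extend_compl_restr gB; case/andP: SOg => /eqP.
- by move=> A A' _ _; rewrite extend_complM.
Qed.

Theorem lemma2p3 (R : realType) (n : nat) (r : 'I_n -> R) :
  (3 <= n)%N ->
  (forall i, 0 < r i) ->
  (forall j, 2 * r j <= \sum_(i < n) r i) ->
  (forall s : 'I_n -> bool, \sum_(i < n) (if s i then r i else - r i) != 0) ->
  forall U : 'I_n -> 'cV[R]_5,
    in_Ur r U -> degenerate U -> of_type U 2 \/ of_type U 3.
Proof.
move=> n_ge3 _ _ signs U polyU [g stab_g g_neq1].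
have [d [B [BB /andP[BW WB]]]] := gram_schmidt (vecs_mx U).
have [k [C [CC BC dk]]] := orthonormal_compl BB.
have UB i : B^T *m (B *m U i) = U i.
  have UiB : ((U i)^T <= B)%MS by rewrite -(row_vecs_mx U) (submx_trans (row_sub _ _) WB).
  by have := congr1 trmx (row_orthonormal_proj BB UiB); rewrite !trmx_mul !trmxK.
have CU i : C *m U i = 0 by rewrite -UB mulmxA (orthogonal_sym BC) mul0mx.
have iso : of_type U k := stab_iso_SO_compl BB CC BC dk BW CU.
have k_gt1 : (1 < k)%N.
  rewrite ltnNge; apply: contra g_neq1 => k_le1; apply/eqP.
  have stab_SO : {subset stab U <= @SOmx R 5} by move=> h /andP[].
  exact: iso_to_SO_le1 k_le1 stab_SO iso g stab_g.
have d_gt1 := polygon_span_dim_gt1 (leq_ltn_trans (leq0n 2) n_ge3) signs polyU UB.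
have /orP[/eqP k2 | /eqP k3] : (k == 2) || (k == 3) by lia.
- by left; rewrite k2 in iso.
- by right; rewrite k3 in iso.
Qed.
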